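(* Let $n\ge2$ and $(s_1,\dots,s_{n-1},p)\in\mathbb C^n$ with $|p|\ne1$, and let $Q=\left(\frac{s_1-\bar s_{n-1}p}{1-|p|^2},\frac{s_2-\bar s_{n-2}p}{1-|p|^2},\dots,\frac{s_{n-1}-\bar s_1p}{1-|p|^2}\right)\in\mathbb C^{n-1}$. Then $(s_1,\dots,s_{n-1},p)\in\mathbb G_n$ if and only if $(s_1,\dots,s_{n-1},p)\in\widetilde{\mathbb G}_n$ and $Q\in\mathbb G_{n-1}$.
   Context: $\mathbb D$ is the open unit disc. For $m\ge1$, $\pi_m:\mathbb C^m\to\mathbb C^m$ maps $z$ to $(s_1(z),\dots,s_{m-1}(z),z_1\cdots z_m)$, $s_i$ the elementary symmetric polynomials; $\mathbb G_m=\pi_m(\mathbb D^m)$ (so $\mathbb G_1=\mathbb D$). $\widetilde{\mathbb G}_n=\{(y_1,\dots,y_{n-1},q)\in\mathbb C^n: q\in\mathbb D,\ y_j=\beta_j+\bar\beta_{n-j}q$ for some $\beta_j\in\mathbb C$ with $|\beta_j|+|\beta_{n-j}|<\binom{n}{j}$, $j=1,\dots,n-1\}$. *)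

From HB Require Import structures.
From mathcomp Require Import all_boot all_order all_algebra.
From mathcomp Require Import reals complex.
Set Implicit Arguments. Unset Strict Implicit. Unset Printing Implicit Defensive.
Import Order.TTheory GRing.Theory Num.Theory.
Local Open Scope ring_scope.
Local Open Scope complex_scope.

(* A point of C^m is encoded as x : nat -> R[i], its coordinates being
   x 1, ..., x m (1-indexed as in the paper; other values are irrelevant).
   Likewise z : nat -> R[i] encodes (z_1,...,z_m) as z 0, ..., z (m-1). *)

Definition inD (R : realType) (w : R[i]) : Prop := `|w| < 1.

Definition esym (R : realType) (m : nat) (z : nat -> R[i]) (k : nat) : R[i] :=
  \sum_(A : {set 'I_m} | #|A| == k) \prod_(j in A) z (val j).

Definition is_pi (R : realType) (m : nat) (z x : nat -> R[i]) : Prop :=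
  (forall k, (1 <= k)%N -> (k <= m.-1)%N -> x k = esym m z k) /\
  x m = \prod_(j < m) z (val j).

Definition inG (R : realType) (m : nat) (x : nat -> R[i]) : Prop :=
  exists z : nat -> R[i], (forall j, (j < m)%N -> inD (z j)) /\ is_pi m z x.

Definition inGt (R : realType) (n : nat) (x : nat -> R[i]) : Prop :=
  inD (x n) /\
  exists beta : nat -> R[i],
    forall j, (1 <= j)%N -> (j <= n.-1)%N ->
      x j = beta j + (beta (n - j)%N)^* * x n /\
      `|beta j| + `|beta (n - j)%N| < ('C(n, j))%:R.

(* Identify x = (x_1, ..., x_n) with the monic polynomial
   P(w) = sum_k (-1)^k x_k w^(n-k)  (x_0 = 1), so that x lies in G_n exactly
   when every root of P lies in the disc, and let P^#(w) = w^n conj(P(1/conj w)).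
   With p = x_n, the Schur-Cohn transform T = (P - (-1)^n p P^#) / ((1 - |p|^2) w)
   is monic of degree n-1 with coefficients (1, Q), and
     P = w T + (-1)^n p T^#,    P^# = T^# + (-1)^n conj(p) w T.
   If the roots of a monic polynomial lie in the disc, then |P^#| <= |P| and
   P <> 0 outside it.  Hence if P has its roots in the disc, then |p| < 1 and
   at a root w of T outside the disc |P(w)| = |p| |P^#(w)| < |P(w)|, which is
   absurd; conversely if |p| < 1 and T has its roots in the disc, a root w of P
   outside it gives |w| |T(w)| = |p| |T^#(w)| <= |p| |T(w)|, again absurd.
   The conditions defining the tilde G_n hold with beta = Q: the identity
   x_j = Q_j + conj(Q_(n-j)) p is algebra, and the bound follows from
   |e_k| <= C(n-1,k), strict for k >= 1, and Pascal's rule. *)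

From Pilot Require Import Defs.
From HB Require Import structures.
From mathcomp Require Import all_boot all_order all_algebra.
From mathcomp Require Import reals complex ring zify.
Set Implicit Arguments. Unset Strict Implicit. Unset Printing Implicit Defensive.
Import Order.TTheory GRing.Theory Num.Theory.
Local Open Scope ring_scope.
Local Open Scope complex_scope.

(* The [esym] of ssrfun (symmetry of equality) would otherwise shadow [Defs.esym]. *)
Local Notation esym := Defs.esym.

Section SchurCohn.
Variable R : realType.
Local Notation C := R[i].

Implicit Types (m n k : nat) (a w : C) (c z : nat -> C).

Lemma esym0 m z : esym m z 0 = 1.
Proof. by rewrite /esym (big_pred1 set0) ?big_set0 // => A; rewrite /= cards_eq0. Qed.

Lemma esym_top m z : esym m z m = \prod_(j < m) z j.
Proof.
rewrite /esym (big_pred1 setT) => [|A /=]; first by apply: eq_bigl => j; rewrite inE.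
apply/eqP/eqP => [cardA|->]; last by rewrite cardsT card_ord.
by apply/setP/subset_cardP; rewrite ?subsetT // cardsT card_ord cardA.
Qed.

Lemma esym_conj m z k : (esym m z k)^* = esym m (fun j => (z j)^*) k.
Proof. by rewrite rmorph_sum; apply: eq_bigr => A _; rewrite rmorph_prod. Qed.

Lemma esymZ m a z k : esym m (fun j => a * z j) k = a ^+ k * esym m z k.
Proof.
rewrite /esym mulr_sumr; apply: eq_bigr => A /eqP <-.
by rewrite big_split /= prodr_const.
Qed.

Lemma prod_add_esym m a z :
  \prod_(j < m) (a + z j) = \sum_(k < m.+1) a ^+ (m - k) * esym m z k.
Proof.
have card_lt (A : {set 'I_m}) : (#|A| < m.+1)%N by rewrite ltnS -[leqRHS]card_ord max_card.
under eq_bigr => j _ do rewrite addrC.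
rewrite bigA_distr (partition_big (fun A : {set 'I_m} => inord #|A| : 'I_m.+1) xpredT) //=.
apply: eq_bigr => k _; rewrite /esym mulr_sumr; apply: eq_big => [A|A /eqP <-].
  by apply/eqP/eqP => [<-|->]; [rewrite inordK | apply: val_inj; rewrite /= inordK].
rewrite inordK // (bigID (mem A)) /= mulrC.
congr (_ * _); last by apply: eq_bigr => j ->.
rewrite (eq_bigr (fun _ => a)) => [|j /negbTE -> //].
have := cardC A; rewrite card_ord => cardAC.
by rewrite prodr_const -[X in (X - _)%N]cardAC addKn.
Qed.

Lemma card_ksets m k : #|[pred A : {set 'I_m} | #|A| == k]| = 'C(m, k).
Proof.
by rewrite -[m in RHS](card_ord m) -card_draws; apply: eq_card => A; rewrite !inE.
Qed.

Section InDisc.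
Variables (m : nat) (z : nat -> C).
Hypothesis zD : forall j, (j < m)%N -> inD (z j).

Lemma norm_prod_le1 (P : pred 'I_m) : `|\prod_(j | P j) z j| <= 1.
Proof.
by rewrite normr_prod; apply: prodr_ile1 => j _; rewrite normr_ge0 ltW ?zD.
Qed.

Lemma norm_prod_lt1 (P : pred 'I_m) j : P j -> `|\prod_(i | P i) z i| < 1.
Proof.
move=> Pj; rewrite (bigD1 j) //= normrM.
by rewrite (le_lt_trans (ler_wpM2l _ (norm_prod_le1 _))) ?mulr1 ?zD.
Qed.

Lemma norm_esym_le k : `|esym m z k| <= 'C(m, k)%:R.
Proof.
rewrite (le_trans (ler_norm_sum _ _ _)) // -card_ksets -sumr_const.
by apply: ler_sum => A _; apply: norm_prod_le1.
Qed.

Lemma norm_esym_lt k : (0 < k <= m)%N -> `|esym m z k| < 'C(m, k)%:R.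
Proof.
case/andP => k_gt0 km; rewrite (le_lt_trans (ler_norm_sum _ _ _)) //.
rewrite -card_ksets -sumr_const; apply: ltr_sum => [|A /eqP cardA].
  have : (0 < #|[pred A : {set 'I_m} | #|A| == k]|)%N by rewrite card_ksets bin_gt0.
  by case/card_gt0P => A cardA; apply/hasP; exists A; rewrite ?mem_index_enum.
have /set0Pn[j jA] : A != set0 by rewrite -card_gt0 cardA.
exact: norm_prod_lt1 jA.
Qed.

End InDisc.

Lemma esym_surj m c :
  c 0 = 1 -> exists z, forall k, (k <= m)%N -> c k = esym m z k.
Proof.
move=> c0; pose P : {poly C} := \poly_(i < m.+1) ((-1) ^+ (m - i) * c (m - i)%N).
have Pm_neq0 : (-1) ^+ (m - m) * c (m - m)%N != 0 by rewrite subnn c0 mulr1 oner_neq0.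
have [r] := closed_field_poly_normal P; rewrite lead_coef_poly // subnn c0 mulr1 scale1r => Pr.
have sizer : size r = m.
  by have := size_prod_XsubC r id; rewrite -Pr size_poly_eq // => -[].
exists (nth 0 r); suff : forall k, (k <= size r)%N -> c k = esym (size r) (nth 0 r) k.
  by rewrite sizer.
move=> k kr; have := congr1 (fun q : {poly C} => q`_(size r - k)) Pr.
rewrite coef_prod_XsubC ?leq_subr // subKn // coef_poly sizer ltnS leq_subr subKn -?sizer //.
exact: (can_inj (signrMK k)).
Qed.

(* For c = esym m z these are prod_j (w - z_j) and its conjugate reciprocal
   w^m conj(esym_poly m c (1 / conj w)) (esym_polyE, esym_recipE). *)
Definition esym_poly m c w := \sum_(k < m.+1) (-1) ^+ k * c k * w ^+ (m - k).

Definition esym_recip m c w := \sum_(k < m.+1) (-1) ^+ k * (c k)^* * w ^+ k.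

Lemma eq_esym_poly m c1 c2 w : (forall k, (k <= m)%N -> c1 k = c2 k) ->
  esym_poly m c1 w = esym_poly m c2 w.
Proof. by move=> c12; apply: eq_bigr => k _; rewrite c12 ?leq_ord. Qed.

Lemma eq_esym_recip m c1 c2 w : (forall k, (k <= m)%N -> c1 k = c2 k) ->
  esym_recip m c1 w = esym_recip m c2 w.
Proof. by move=> c12; apply: eq_bigr => k _; rewrite c12 ?leq_ord. Qed.

Lemma esym_polyE m z w : esym_poly m (esym m z) w = \prod_(j < m) (w - z j).
Proof.
under [RHS]eq_bigr => j _ do rewrite -mulN1r.
rewrite (prod_add_esym m w (fun j => -1 * z j)); apply: eq_bigr => k _.
by rewrite esymZ mulrC.
Qed.

Lemma esym_recipE m z w :
  esym_recip m (esym m z) w = \prod_(j < m) (1 - (z j)^* * w).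
Proof.
under [RHS]eq_bigr => j _ do rewrite -mulrN mulrC.
rewrite (prod_add_esym m 1 (fun j => - w * (z j)^*)); apply: eq_bigr => k _.
by rewrite esymZ -esym_conj (exprNn w) expr1n mul1r mulrAC.
Qed.

Lemma esym_poly_top0 m c w :
  c m.+1 = 0 -> esym_poly m.+1 c w = w * esym_poly m c w.
Proof.
move=> c_top; rewrite /esym_poly big_ord_recr /= c_top mulr0 mul0r addr0 mulr_sumr.
by apply: eq_bigr => k _; rewrite subSn ?leq_ord // exprS mulrCA.
Qed.

Lemma esym_recip_top0 m c w :
  c m.+1 = 0 -> esym_recip m.+1 c w = esym_recip m c w.
Proof.
by move=> c_top; rewrite /esym_recip big_ord_recr /= c_top conjC0 mulr0 mul0r addr0.
Qed.

Lemma sum_sign_rev m (F : nat -> nat -> C) :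
  \sum_(k < m.+1) (-1) ^+ k * F k (m - k)%N =
  (-1) ^+ m * \sum_(k < m.+1) (-1) ^+ k * F (m - k)%N k.
Proof.
rewrite (reindex_inj rev_ord_inj) mulr_sumr; apply: eq_bigr => k _ /=.
have km : (k <= m)%N by rewrite -ltnS.
have -> : (-1) ^+ m = (-1) ^+ (m - k) * (-1) ^+ k :> C by rewrite -exprD subnK.
by rewrite subSS subKn // -mulrA signrMK.
Qed.

(* The coefficients of (P - (-1)^n c_n P^#) / ((1 - |c_n|^2) w), where
   P = esym_poly n c (see esym_poly_schur and esym_recip_schur). *)
Definition schur n c k :=
  (c k - (c (n - k)%N)^* * c n) / (1 - `|c n| ^+ 2).

Section SchurTransform.
Variables (n : nat) (c : nat -> C).
Hypotheses (c0 : c 0 = 1) (cn : `|c n| != 1).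

Lemma schur_denom_neq0 : 1 - `|c n| ^+ 2 != 0.
Proof. by rewrite subr_eq0 eq_sym sqrp_eq1. Qed.

Lemma schur0 : schur n c 0 = 1.
Proof. by rewrite /schur subn0 c0 -normCKC divff // schur_denom_neq0. Qed.

Lemma schur_top : schur n c n = 0.
Proof. by rewrite /schur subnn c0 conjC1 mul1r subrr mul0r. Qed.

Lemma schur_decomp k : (k <= n)%N -> c k = schur n c k + (schur n c (n - k))^* * c n.
Proof.
move=> kn; have := schur_denom_neq0; rewrite /schur subKn // normCK => d_neq0.
rewrite !(rmorphM, rmorphB, fmorphV, rmorph1) /= !conjCK.
by field; rewrite mulrC.
Qed.

End SchurTransform.

Section SchurReduction.
Variables (m : nat) (c : nat -> C) (w : C).
Hypotheses (c0 : c 0 = 1) (cn : `|c m.+1| != 1).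
Local Notation t := (schur m.+1 c).

Lemma esym_poly_schur :
  esym_poly m.+1 c w = w * esym_poly m t w + (-1) ^+ m.+1 * c m.+1 * esym_recip m t w.
Proof.
rewrite /esym_poly; under eq_bigr => k _ do rewrite (schur_decomp cn (leq_ord k)).
under eq_bigr => k _ do rewrite mulrDr mulrDl.
rewrite big_split /= -/(esym_poly m.+1 t w) esym_poly_top0 ?schur_top //.
congr (_ + _); under eq_bigr => k _ do rewrite -mulrA.
rewrite (sum_sign_rev m.+1 (fun _ j => (t j)^* * c m.+1 * w ^+ j)).
rewrite -esym_recip_top0 ?schur_top ?conjC0 // /esym_recip mulr_sumr mulr_sumr.
by apply: eq_bigr => k _; ring.
Qed.

Lemma esym_recip_schur :
  esym_recip m.+1 c w = esym_recip m t w + (-1) ^+ m.+1 * (c m.+1)^* * w * esym_poly m t w.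
Proof.
rewrite /esym_recip; under eq_bigr => k _ do rewrite (schur_decomp cn (leq_ord k)).
under eq_bigr => k _ do rewrite rmorphD rmorphM /= conjCK mulrDr mulrDl.
rewrite big_split /= -/(esym_recip m.+1 t w) esym_recip_top0 ?schur_top //.
congr (_ + _); under eq_bigr => k _ do rewrite -mulrA.
rewrite (sum_sign_rev m.+1 (fun i j => t j * (c m.+1)^* * w ^+ i)).
rewrite -mulrA -esym_poly_top0 ?schur_top // /esym_poly mulr_sumr mulr_sumr.
by apply: eq_bigr => k _; ring.
Qed.

End SchurReduction.

Definition disc_roots m c := exists2 z : nat -> C,
  (forall j, (j < m)%N -> inD (z j)) & forall k, (k <= m)%N -> c k = esym m z k.

Lemma eq_disc_roots m c1 c2 :
  (forall k, (k <= m)%N -> c1 k = c2 k) -> disc_roots m c1 <-> disc_roots m c2.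
Proof.
move=> c12; split=> -[z zD cz]; exists z => // k km; first by rewrite -c12 ?cz.
by rewrite c12 ?cz.
Qed.

Lemma norm_1_sub_conjM_le a w :
  `|a| < 1 -> 1 <= `|w| -> `|1 - a^* * w| <= `|w - a|.
Proof.
move=> a_lt1 w_ge1; rewrite -(@ler_pXn2r _ 2) ?nnegrE // !normCK -subr_ge0.
have -> : (w - a) * (w - a)^* - (1 - a^* * w) * (1 - a^* * w)^* =
          (`|w| ^+ 2 - 1) * (1 - `|a| ^+ 2).
  by rewrite !normCK !rmorphB !rmorphM rmorph1 /= conjCK; ring.
by rewrite mulr_ge0 // subr_ge0 ?exprn_ege1 // exprn_ile1 // ltW.
Qed.

Section Roots.
Variables (m : nat) (c : nat -> C).
Hypothesis cD : disc_roots m c.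

Lemma disc_roots_poly_neq0 w : 1 <= `|w| -> esym_poly m c w != 0.
Proof.
case: cD => z zD cz w_ge1; rewrite (eq_esym_poly _ cz) esym_polyE.
apply/prodf_neq0 => j _; rewrite subr_eq0; apply: contraTneq w_ge1 => ->.
by rewrite lt_geF ?zD.
Qed.

Lemma norm_esym_recip_le w : 1 <= `|w| -> `|esym_recip m c w| <= `|esym_poly m c w|.
Proof.
case: cD => z zD cz w_ge1.
rewrite (eq_esym_poly _ cz) (eq_esym_recip _ cz) esym_polyE esym_recipE !normr_prod.
by apply: ler_prod => j _; rewrite normr_ge0 norm_1_sub_conjM_le ?zD.
Qed.

Lemma disc_roots_top : (0 < m)%N -> `|c m| < 1.
Proof.
case: cD => z zD cz m_gt0; rewrite cz // esym_top.
exact: (@norm_prod_lt1 _ _ zD (fun _ => true) (Ordinal m_gt0)).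
Qed.

Lemma disc_roots_coef_bound j : (0 < j <= m)%N ->
  `|c j| + `|c (m.+1 - j)%N| < 'C(m.+1, j)%:R.
Proof.
case: cD => z zD cz; case: j => // i /= im.
rewrite !cz ?subSS ?leq_subr // binS natrD; apply: ltr_leD; first exact: norm_esym_lt.
by rewrite -(bin_sub (ltnW im)); apply: norm_esym_le.
Qed.

End Roots.

Lemma disc_roots_nonvanishing m c : c 0 = 1 ->
  (forall w, 1 <= `|w| -> esym_poly m c w != 0) -> disc_roots m c.
Proof.
move=> c0 nz; have [z cz] := esym_surj m c0; exists z => // j jm.
rewrite /inD real_ltNge ?normr_real ?real1 //; apply/negP => /nz.
by rewrite (eq_esym_poly _ cz) esym_polyE (bigD1 (Ordinal jm)) //= subrr mul0r eqxx.
Qed.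

Section ReductionStep.
Variables (m : nat) (c : nat -> C).
Hypothesis c0 : c 0 = 1.
Local Notation t := (schur m.+1 c).

Lemma schur_disc_roots : disc_roots m.+1 c -> disc_roots m t.
Proof.
move=> cD; have c_lt1 := disc_roots_top cD (ltn0Sn m).
have cn : `|c m.+1| != 1 by rewrite lt_eqF.
apply: disc_roots_nonvanishing => [|w w_ge1]; first exact: schur0.
apply/eqP => t0; have P_neq0 := disc_roots_poly_neq0 cD w_ge1.
have := esym_poly_schur w c0 cn; rewrite t0 mulr0 add0r => Pw.
have := esym_recip_schur w c0 cn; rewrite t0 mulr0 addr0 => P'w.
have : `|esym_poly m.+1 c w| <= `|c m.+1| * `|esym_poly m.+1 c w|.
  rewrite {1}Pw -P'w normrM normrM normr_sign mul1r ler_wpM2l //.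
  exact: norm_esym_recip_le.
by rewrite ler_pMl ?normr_gt0 // lt_geF.
Qed.

Lemma disc_roots_schur : `|c m.+1| < 1 -> disc_roots m t -> disc_roots m.+1 c.
Proof.
move=> c_lt1 tD; have cn : `|c m.+1| != 1 by rewrite lt_eqF.
apply: disc_roots_nonvanishing => // w w_ge1; apply/eqP => P0.
have T_neq0 := disc_roots_poly_neq0 tD w_ge1.
move: (esym_poly_schur w c0 cn); rewrite P0 => /eqP; rewrite eq_sym addr_eq0 => /eqP Tw.
have : `|w| * `|esym_poly m t w| <= `|c m.+1| * `|esym_poly m t w|.
  rewrite -normrM Tw normrN !normrM normr_sign mul1r ler_wpM2l //.
  exact: norm_esym_recip_le.
rewrite ler_pM2r ?normr_gt0 // => w_le.
by have := lt_le_trans c_lt1 (le_trans w_ge1 w_le); rewrite ltxx.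
Qed.

End ReductionStep.

Definition monic_coef (x : nat -> C) k : C := if k == 0%N then 1 else x k.

Lemma inG_disc_roots m (x : nat -> C) :
  (0 < m)%N -> inG m x <-> disc_roots m (monic_coef x).
Proof.
rewrite /monic_coef => m_gt0; split => [[z [zD [xz xm]]] | [z zD xz]].
  exists z => // k km; case: eqP => [->|/eqP k_neq0]; first by rewrite esym0.
  by case: (k =P m) => [->|/eqP k_neq_m]; [rewrite esym_top | apply: xz; lia].
exists z; split => //; split => [k k_gt0 km|]; last by rewrite -esym_top -xz // gtn_eqF.
by rewrite -xz; [rewrite gtn_eqF | lia].
Qed.

End SchurCohn.

Theorem mainTheorem7 (R : realType) (n : nat) (s : nat -> R[i]) (p : R[i]) :
  (2 <= n)%N -> `|p| != 1 ->
  let x := fun k : nat => if k == n then p else s k in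
  let Q := fun k : nat =>
    (s k - (s (n - k)%N)^* * p) / (1 - `|p| ^+ 2) in
  inG n x <-> (inGt n x /\ inG n.-1 Q).
Proof.
case: n => [|m] // m_gt0 p_neq1 x Q; set c := monic_coef x.
have c0 : c 0%N = 1 by [].
have cn : c m.+1 = p by rewrite /c /monic_coef /x eqxx.
have cn_neq1 : `|c m.+1| != 1 by rewrite cn.
have Qt k : (k <= m)%N -> monic_coef Q k = schur m.+1 c k.
  move=> km; rewrite /monic_coef; case: eqP => [->|/eqP k_neq0]; first by rewrite schur0.
  rewrite /schur cn /c /monic_coef /x !ifN_eq //; lia.
rewrite (inG_disc_roots _ (ltn0Sn m)) (inG_disc_roots Q m_gt0).
split => [cD | [[p_lt1 _] tD]].
  have tD := schur_disc_roots c0 cD.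
  split; last exact/(eq_disc_roots Qt).
  split; first by rewrite /inD /x eqxx -cn; exact: disc_roots_top cD _.
  exists (schur m.+1 c) => j j_gt0 jm; split.
    have -> : x j = c j by rewrite /c /monic_coef gtn_eqF.
    by apply: schur_decomp; [exact: cn_neq1 | lia].
  by apply: (disc_roots_coef_bound tD); rewrite j_gt0.
apply: disc_roots_schur c0 _ ((eq_disc_roots Qt).1 tD).
by rewrite cn; move: p_lt1; rewrite /inD /x eqxx.
Qed.
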